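(* Consider the CT–DT interconnected system described in the context, and let Assumptions (A1), (A2), (A3) hold with respect to the norms $\|\cdot\|_{\mathcal X}$ and $\|\cdot\|_{\mathcal Z}$. Suppose that $$-\mathsf{osLip}_x(f)\,\big(1-\mathsf{Lip}_z(\mathsf G)\big) > \mathsf{Lip}_z(f)\,\mathsf{Lip}_x(\mathsf G).$$ Then for every $n\in\mathbb Z_{>0}$ and every $T>0$ there exists a vector $\eta=(\eta_1,\eta_2)\in\mathbb R^2_{>0}$ such that, with the composite norm $\|(x,z)\|_{\mathsf{cmp}}:=\big\|(\|x\|_{\mathcal X},\|z\|_{\mathcal Z})\big\|_{2,[\eta]}$ on $\mathbb R^{n_x+n_z}$, where $\|(v_1,v_2)\|_{2,[\eta]}:=\sqrt{\eta_1v_1^2+\eta_2v_2^2}$: (i) the interconnected system is $T$-discrete-time contractive with respect to $\|\cdot\|_{\mathsf{cmp}}$, i.e., there is $b\in(0,1)$ with $\|y(kT)-\bar y(kT)\|_{\mathsf{cmp}}\le b^k\|y(0)-\bar y(0)\|_{\mathsf{cmp}}$ for all $k\in\mathbb Z_{\ge0}$ and all pairs of solutions $y,\bar y$; (ii) the origin is globally exponentially stable for the interconnected system, i.e., there exist $r\ge0$, $a>0$ with $\|y(t)\|_{\mathsf{cmp}}\le r e^{-at}\|y(0)\|_{\mathsf{cmp}}$ for all $t\ge0$ and all solutions $y$.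
   Context: Setup. Let $\|\cdot\|_{\mathcal X}$ be a norm on $\mathbb R^{n_x}$ and $\|\cdot\|_{\mathcal Z}$ a norm on $\mathbb R^{n_z}$; $\mathcal X\subseteq\mathbb R^{n_x}$, $\mathcal Z\subseteq\mathbb R^{n_z}$ are convex sets. Let $f:\mathcal X\times\mathcal Z\to\mathbb R^{n_x}$ and $\mathsf G:\mathcal X\times\mathcal Z\to\mathcal Z$ be continuous, and define $\mathsf G^1(x,z)=\mathsf G(x,z)$, $\mathsf G^{m+1}(x,z)=\mathsf G(x,\mathsf G^m(x,z))$. For $T>0$ and $n\in\mathbb Z_{>0}$ the interconnected (sampled-data) system is $\dot x(t)=f(x(t),z(t))$, $z_k=\mathsf G^n(x(kT),z_{k-1})$, $z(t)=z_k$ for $t\in[kT,(k+1)T)$, $k\in\mathbb Z_{\ge0}$, with state $y(t)=(x(t),z(t))$; $\mathcal X\times\mathcal Z$ is assumed forward invariant. It is assumed $f(0,0)=0$ and $\mathsf G(0,0)=0$. Lipschitz notions. $\mathsf{Lip}_z(f):=\sup_x\sup_{z_1\ne z_2}\|f(x,z_1)-f(x,z_2)\|_{\mathcal X}/\|z_1-z_2\|_{\mathcal Z}$; $\mathsf{Lip}_x(f)$, $\mathsf{Lip}_x(\mathsf G)$, $\mathsf{Lip}_z(\mathsf G)$ are defined analogously (sup over the other argument, with the appropriate norms). Let $\llbracket\cdot;\cdot\rrbracket$ be a weak pairing on $\mathbb R^{n_x}$ compatible with $\|\cdot\|_{\mathcal X}$ (in particular $\llbracket x;x\rrbracket=\|x\|_{\mathcal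 X}^2$, sub-additive in first argument, and $\llbracket x;y\rrbracket\le\|x\|_{\mathcal X}\|y\|_{\mathcal X}$; for the Euclidean norm it is the inner product). The one-sided Lipschitz constant is $\mathsf{osLip}_x(f):=\sup_z\sup_{x_1\ne x_2}\llbracket f(x_1,z)-f(x_2,z);x_1-x_2\rrbracket/\|x_1-x_2\|_{\mathcal X}^2$, and for a map $F:\mathcal X\to\mathbb R^{n_x}$, $\mathsf{osLip}(F):=\sup_{x_1\ne x_2}\llbracket F(x_1)-F(x_2);x_1-x_2\rrbracket/\|x_1-x_2\|_{\mathcal X}^2$. Assumptions. (A1) $x\mapsto f(x,z)$ is Lipschitz uniformly in $z\in\mathcal Z$ ($\mathsf{Lip}_x(f)<\infty$). (A2) $\mathsf{Lip}_z(f)\in(0,\infty)$ and $\mathsf{Lip}_x(\mathsf G)\in(0,\infty)$. (A3) $\mathsf{Lip}_z(\mathsf G)<1$. *)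

From HB Require Import structures.
From mathcomp Require Import all_boot all_order all_algebra.
From mathcomp Require Import all_classical all_reals all_analysis.
Set Implicit Arguments. Unset Strict Implicit. Unset Printing Implicit Defensive.
Import Order.TTheory GRing.Theory Num.Theory.
Import numFieldNormedType.Exports.
Local Open Scope classical_set_scope.
Local Open Scope ring_scope.

Definition is_norm (R : realType) (n : nat) (N : 'rV[R]_n -> R) : Prop :=
  [/\ (forall x, 0 <= N x),
      (forall x, N x = 0 -> x = 0),
      (forall (a : R) x, N (a *: x) = `|a| * N x) &
      (forall x y, N (x + y) <= N x + N y)].

Definition is_weak_pairing (R : realType) (n : nat)
    (wp : 'rV[R]_n -> 'rV[R]_n -> R) : Prop :=
  [/\ (forall x1 x2 y, wp (x1 + x2) y <= wp x1 y + wp x2 y)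
      /\ (forall y, continuous (fun x : 'rV[R]_n => wp x y)),
      (forall (a : R) x y, 0 <= a ->
          wp (a *: x) y = a * wp x y /\ wp x (a *: y) = a * wp x y),
      (forall x y, wp (- x) (- y) = wp x y),
      (forall x, x != 0 -> 0 < wp x x) &
      (forall x y, `|wp x y| <= Num.sqrt (wp x x) * Num.sqrt (wp y y))].

Definition wp_compatible (R : realType) (n : nat)
    (wp : 'rV[R]_n -> 'rV[R]_n -> R) (N : 'rV[R]_n -> R) : Prop :=
  forall x, wp x x = N x ^+ 2.

Definition Lip_fst (R : realType) (m p q : nat)
    (N1 : 'rV[R]_m -> R) (N2 : 'rV[R]_q -> R)
    (A : set 'rV[R]_m) (B : set 'rV[R]_p)
    (F : 'rV[R]_m -> 'rV[R]_p -> 'rV[R]_q) : \bar R :=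
  ereal_sup [set e | exists a1 a2 b, [/\ A a1, A a2, B b, a1 != a2 &
      e = (N2 (F a1 b - F a2 b) / N1 (a1 - a2))%:E]].

Definition Lip_snd (R : realType) (m p q : nat)
    (N1 : 'rV[R]_p -> R) (N2 : 'rV[R]_q -> R)
    (A : set 'rV[R]_m) (B : set 'rV[R]_p)
    (F : 'rV[R]_m -> 'rV[R]_p -> 'rV[R]_q) : \bar R :=
  ereal_sup [set e | exists a b1 b2, [/\ A a, B b1, B b2, b1 != b2 &
      e = (N2 (F a b1 - F a b2) / N1 (b1 - b2))%:E]].

Definition osLip_x (R : realType) (nx nz : nat)
    (wp : 'rV[R]_nx -> 'rV[R]_nx -> R) (N : 'rV[R]_nx -> R)
    (X : set 'rV[R]_nx) (Z : set 'rV[R]_nz)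
    (f : 'rV[R]_nx -> 'rV[R]_nz -> 'rV[R]_nx) : \bar R :=
  ereal_sup [set e | exists x1 x2 z, [/\ X x1, X x2, Z z, x1 != x2 &
      e = (wp (f x1 z - f x2 z) (x1 - x2) / N (x1 - x2) ^+ 2)%:E]].

Definition samp_index (R : realType) (T t : R) : nat := Num.truncn (t / T).

(* A solution of the sampled-data interconnection
     xdot = f(x, z(t)),  z_k = G^n(x(kT), z_{k-1}),  z(t) = z_k on [kT,(k+1)T),
   given by the continuous part x : R -> R^nx (considered on t >= 0),
   the initial memory z_{-1} = zm1 and the sequence zd k = z_k. *)
Definition is_solution (R : realType) (nx nz : nat)
    (f : 'rV[R]_nx -> 'rV[R]_nz -> 'rV[R]_nx)
    (G : 'rV[R]_nx -> 'rV[R]_nz -> 'rV[R]_nz) (n : nat) (T : R)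
    (x : R -> 'rV[R]_nx) (zm1 : 'rV[R]_nz) (zd : nat -> 'rV[R]_nz) : Prop :=
  [/\ {within [set t : R | 0 <= t], continuous x},
      (forall k : nat, zd k = iter n (G (x (k%:R * T)))
                                 (if k is k'.+1 then zd k' else zm1)) &
      (forall (k : nat) (t : R), k%:R * T < t < k.+1%:R * T ->
          is_derive t (1 : R) x (f (x t) (zd k)))].

Definition z_of (R : realType) (nz : nat) (T : R) (zd : nat -> 'rV[R]_nz)
    (t : R) : 'rV[R]_nz := zd (samp_index T t).

Definition cmp_norm (R : realType) (nx nz : nat)
    (Nx : 'rV[R]_nx -> R) (Nz : 'rV[R]_nz -> R) (eta1 eta2 : R)
    (x : 'rV[R]_nx) (z : 'rV[R]_nz) : R :=
  Num.sqrt (eta1 * Nx x ^+ 2 + eta2 * Nz z ^+ 2).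

From HB Require Import structures.
From mathcomp Require Import all_boot all_order all_algebra.
From mathcomp Require Import all_classical all_reals all_analysis.
From mathcomp Require Import ring lra.
Import Order.TTheory GRing.Theory Num.Theory.
Import numFieldNormedType.Exports.
Local Open Scope classical_set_scope.
Local Open Scope ring_scope.

(* On a sampling interval the input [z] is frozen, so the one-sided Lipschitz
   bound [c < 0] and a comparison argument for the left Dini derivative give
   |dx((k+1)T)| <= e^{cT} |dx(kT)| + (1 - e^{cT}) (a/|c|) |dz_k|, while [n]
   iterations of [G] give |dz_(k+1)| <= gam^n |dz_k| + g (sum_(i<n) gam^i) |dx((k+1)T)|.
   The small-gain condition [a g < |c| (1 - gam)] is exactly what makes the
   resulting nonnegative 2x2 matrix a contraction; weights [eta] built from its
   left and right sub-eigenvectors make the composite norm decrease by a factor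
   [rho < 1] per period.  Comparing a solution with the zero solution and
   bounding the growth inside one period turns this into exponential decay. *)

(** * Comparison for left Dini derivatives *)

Lemma within_continuous_dist_lt {R : realType} {V : normedModType R}
    {A : set R} {f : R -> V} {x eps : R} :
  {within A, continuous f} -> A x -> 0 < eps ->
  exists2 d : R, 0 < d & forall y, A y -> `|x - y| < d -> `|f x - f y| < eps.
Proof.
move=> /subspace_continuousP fc Ax e0.
move/cvgrPdist_lt: (fc x Ax) => /(_ eps e0).
rewrite /within => /nbhs_ballP [d d0 H].
by exists d => // y Ay xy; apply: H.
Qed.

Lemma within_continuousB (R : realType) (A : set R) (f g : R -> R) :
  {within A, continuous f} -> continuous g ->
  {within A, continuous (fun t => f t - g t)}.
Proof.
move=> /subspace_continuousP fc gc; apply/subspace_continuousP => x Ax.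
by apply: cvgB; [exact: fc | exact: cvg_within_filter (gc x)].
Qed.

(* [chi] cannot become positive if, at each of its zeros, it is nonnegative
   at points arbitrarily close on the left: the first point where [chi >= 0]
   would be such a zero preceded by negative values only. *)
Lemma continuous_barrier (R : realType) (chi : R -> R) t0 t1 :
  t0 <= t1 -> {within `[t0, t1], continuous chi} -> chi t0 < 0 ->
  (forall t, t0 < t -> t < t1 -> chi t = 0 -> forall d, 0 < d ->
     exists h, [/\ 0 < h, h < d, t0 <= t - h & 0 <= chi (t - h)]) ->
  chi t1 <= 0.
Proof.
move=> t01 cc c0 H; rewrite leNgt; apply/negP => c1.
pose S := [set t | t0 <= t <= t1 /\ 0 <= chi t].
have S1 : S t1 by split; [rewrite t01 lexx | exact: ltW].
have lbS : has_lbound S by exists t0 => y [/andP[]].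
have hiS : has_inf S by split => //; exists t1.
set s := inf S.
have s0 : t0 <= s by apply: lb_le_inf => //; [exists t1 | move=> y [/andP[]]].
have s1 : s <= t1 by apply: (ge_inf lbS).
have sA : [set` `[t0, t1]] s by rewrite /= in_itv /= s0 s1.
have neg_before_s t : t0 <= t -> t < s -> chi t < 0.
  move=> tt ts; rewrite ltNge; apply/negP => ct.
  have : s <= t.
    by apply: (ge_inf lbS); split => //; rewrite tt /= (ltW (lt_le_trans ts s1)).
  by rewrite leNgt ts.
have chi_s_ge0 : 0 <= chi s.
  rewrite leNgt; apply/negP => cs.
  have cs0 : 0 < - chi s by rewrite oppr_gt0.
  have [d d0 Hd] := within_continuous_dist_lt cc sA cs0.
  have [u Su us] := inf_adherent d0 hiS.
  have su : s <= u by apply: (ge_inf lbS).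
  have uA : [set` `[t0, t1]] u.
    by case: Su => /andP[a b] _; rewrite /= in_itv /= a b.
  have sud : `|s - u| < d.
    by rewrite distrC ger0_norm ?subr_ge0 //; rewrite -/s in us; lra.
  have := Hd u uA sud; case: Su => _ cu.
  rewrite ltr_norml => /andP[h1 h2]; lra.
have st0 : t0 < s.
  by rewrite lt_neqAle s0 andbT; apply/eqP => e; move: c0; rewrite e; lra.
have chi_s0 : chi s = 0.
  apply/eqP; rewrite eq_le chi_s_ge0 andbT leNgt; apply/negP => cs.
  have := @IVT R chi t0 s 0 s0 (continuous_subspaceW _ cc).
  case.
  - by move=> x; rewrite /= !in_itv /= => /andP[a b]; rewrite a (le_trans b s1).
  - by rewrite ge_min (ltW c0) le_max (ltW cs) orbT.
  move=> c; rewrite in_itv /= => /andP[a b] cc0.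
  have : c < s.
    by rewrite lt_neqAle b andbT; apply/eqP => e; move: cs; rewrite -e cc0 ltxx.
  by move/(neg_before_s c a); rewrite cc0 ltxx.
have st1 : s < t1.
  by rewrite lt_neqAle s1 andbT; apply/eqP => e; move: c1; rewrite -e; lra.
have [h [h0 hd th ch]] := H s st0 st1 chi_s0 (s - t0) (ltac:(lra)).
by have := neg_before_s (s - h) th (ltac:(lra)); lra.
Qed.

Lemma is_derive_left_quotient {R : realType} {V : normedModType R}
    {f : R -> V} {t : R} {d : V} {eps : R} :
  is_derive t (1 : R) f d -> 0 < eps ->
  exists2 del : R, 0 < del & forall h, 0 < h -> h < del ->
    `|d - h^-1 *: (f t - f (t - h))| < eps.
Proof.
move=> [fd dv] e0.
have H : (fun h : R => h^-1 *: ((f \o shift t) (h *: 1) - f t)) @ 0^' --> d.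
  by rewrite -dv; exact: fd.
move/cvgrPdist_lt : H => /(_ eps e0) /nbhs_ballP [del d0 Hd].
exists del => // h h0 hd.
have := Hd (- h).
rewrite -ball_normE /ball_ /= sub0r opprK gtr0_norm // => /(_ hd).
rewrite oppr_eq0 gt_eqF //= => /(_ isT).
rewrite /shift /= scaler1 invrN scaleNr -scalerN opprB addrC.
by rewrite [- h + t]addrC [X in `|X|]addrC.
Qed.

Lemma is_derive_expR_affine {R : realType} (A B c t0 t : R) :
  is_derive t (1 : R) (fun s => A * expR (c * (s - t0)) + B)
    (c * A * expR (c * (t - t0))).
Proof.
by apply: trigger_derive; rewrite /GRing.scale /= subr0 mulr1 addr0; ring.
Qed.

(* Comparison with the solution [p] of [p' = c p + K + ep], [p t0 = phi t0 + ep]: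
   at a first contact point [phi = p] the left-difference bound on [phi] and
   the derivative of [p] force [phi - p >= 0] just before, which the barrier
   lemma excludes. *)
Lemma left_dini_comparison (R : realType) (phi : R -> R) (t0 t1 c K : R) :
  c < 0 -> t0 <= t1 -> {within `[t0, t1], continuous phi} ->
  (forall t, t0 < t -> t < t1 -> forall eps, 0 < eps ->
     exists2 del, 0 < del & forall h, 0 < h -> h < del ->
       phi t - phi (t - h) <= h * (c * phi t + K + eps)) ->
  phi t1 <= expR (c * (t1 - t0)) * phi t0
            + (1 - expR (c * (t1 - t0))) * (K / - c).
Proof.
move=> c0 t01 pc Hd.
set E := expR (c * (t1 - t0)).
have E0 : 0 < E by rewrite expR_gt0.
have E1 : E <= 1 by rewrite -expR0 ler_expR; apply: mulr_le0_ge0; lra.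
have ic0 : 0 < 1 / - c by rewrite divr_gt0 //; lra.
apply/ler_addgt0Pr => e e0.
pose ep := e / (1 + 1 / - c).
have ep0 : 0 < ep by rewrite divr_gt0 //; lra.
have epe : ep * (1 + 1 / - c) = e by rewrite /ep mulrVK // unitfE; lra.
pose B := (K + ep) / - c.
pose A := phi t0 + ep - B.
pose p := fun s => A * expR (c * (s - t0)) + B.
have cB : - c * B = K + ep by rewrite /B mulrC mulfVK //; lra.
have : phi t1 - p t1 <= 0.
  apply: (@continuous_barrier R (fun t => phi t - p t) t0 t1) => //.
  - apply: within_continuousB => // x.
    have [+ _] := is_derive_expR_affine A B c t0 x.
    by move/derivable1_diffP/differentiable_continuous.
  - by rewrite /p subrr mulr0 expR0 mulr1 /A; lra.
  move=> t tt0 tt1 ct d d0.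
  have ep2 : 0 < ep / 2 by lra.
  have [d1 d10 H1] := Hd t tt0 tt1 _ ep2.
  have [d2 d20 H2] := is_derive_left_quotient (is_derive_expR_affine A B c t0 t) ep2.
  pose m := Num.min (Num.min d1 d2) (Num.min d (t - t0)).
  have m0 : 0 < m by rewrite !lt_min d10 d20 d0 /=; lra.
  have md1 : m <= d1 by rewrite /m !ge_min lexx.
  have md2 : m <= d2 by rewrite /m !ge_min lexx orbT.
  have md : m <= d by rewrite /m !ge_min lexx !orbT.
  have mt : m <= t - t0 by rewrite /m !ge_min lexx !orbT.
  exists (m / 2); split; try lra.
  have h0 : 0 < m / 2 by lra.
  have := H1 (m / 2) h0 (ltac:(lra)).
  have := H2 (m / 2) h0 (ltac:(lra)).
  set h := m / 2; set q := p t - p (t - h).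
  rewrite /GRing.scale /=.
  set p' := c * A * expR (c * (t - t0)).
  have pt : phi t = p t by move: ct; lra.
  have pp : p' = c * p t + K + ep by rewrite -addrA -cB /p' /p; ring.
  rewrite ltr_norml => /andP[_ hq1].
  have hq : h * (p' - ep / 2) <= q.
    have -> : q = h * (h^-1 * q) by rewrite mulrA divff ?mul1r // gt_eqF.
    by apply: ler_wpM2l; [apply: ltW | lra].
  have ee : h * (c * phi t + K + ep / 2) = h * (p' - ep / 2).
    by rewrite pp pt; congr (_ * _); lra.
  rewrite ee /q; move: hq pt; rewrite /q.
  move: (h * (p' - ep / 2)) (p t) (p (t - h)) (phi t) (phi (t - h)) => a1 a2 a3 a4 a5; lra.
rewrite /= /p /A /B => h.
have h' : phi t1 <= (phi t0 + ep) * E + (K + ep) / - c * (1 - E) by rewrite /E; lra.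
apply: (le_trans h').
have -> : (K + ep) / - c * (1 - E) = K / - c * (1 - E) + ep * (1 / - c) * (1 - E).
  by rewrite !mulrDl; ring.
have : ep * (1 / - c) * (1 - E) <= ep * (1 / - c).
  by rewrite -[X in _ <= X]mulr1 ler_wpM2l //; [apply: mulr_ge0; lra | lra].
have : ep * E <= ep by rewrite -[X in _ <= X]mulr1 ler_wpM2l //; lra.
rewrite -epe; lra.
Qed.

Section Norms.
Context {R : realType} {n : nat} {N : 'rV[R]_n -> R}.
Hypothesis hN : is_norm N.

Lemma isnorm_ge0 x : 0 <= N x. Proof. by case: hN. Qed.
Lemma isnormZ a x : N (a *: x) = `|a| * N x. Proof. by case: hN. Qed.
Lemma isnormD x y : N (x + y) <= N x + N y. Proof. by case: hN. Qed.

Lemma isnorm0 : N 0 = 0.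
Proof. by rewrite -(scale0r (0 : 'rV[R]_n)) isnormZ normr0 mul0r. Qed.

Lemma isnormN x : N (- x) = N x.
Proof. by rewrite -scaleN1r isnormZ normrN normr1 mul1r. Qed.

Lemma isnorm_gt0 x : x != 0 -> 0 < N x.
Proof.
move=> x0; rewrite lt_neqAle isnorm_ge0 andbT; apply/eqP => /esym h.
by case: hN => _ h0 _ _; move: x0; rewrite (h0 _ h) eqxx.
Qed.

Lemma isnorm_dist x y : `|N x - N y| <= N (x - y).
Proof.
have := isnormD (x - y) y; have := isnormD (y - x) x.
rewrite !subrK -(isnormN (y - x)) opprB ler_norml; lra.
Qed.

Lemma isnorm_le_mx_norm : exists2 C, 0 < C & forall x, N x <= C * `|x|.
Proof.
exists (1 + \sum_(j < n) N (delta_mx 0 j)).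
  by rewrite ltr_pwDl // sumr_ge0 // => j _; exact: isnorm_ge0.
move=> x; rewrite mulrDl mul1r.
have H : N x <= \sum_(j < n) `|x| * N (delta_mx 0 j).
  rewrite {1}(row_sum_delta x).
  elim/big_ind2: _ => //.
  - by rewrite isnorm0.
  - by move=> a b c d h1 h2; apply: le_trans (isnormD _ _) _; apply: lerD.
  move=> j _; rewrite isnormZ; apply: ler_wpM2r; first exact: isnorm_ge0.
  have -> : `|x| = mx_norm x by [].
  by rewrite mx_normrE; exact: (le_bigmax _ _ (0, j)).
by apply: le_trans H _; rewrite -mulr_sumr mulrC ler_wpDl.
Qed.

Lemma isnorm_continuous : continuous N.
Proof.
have [C C0 HC] := isnorm_le_mx_norm.
move=> x; apply/(@cvgrPdist_lt _ _ _ (nbhs x) _) => e e0.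
apply/nbhs_ballP; exists (e / C); first exact: divr_gt0.
move=> y; rewrite -ball_normE /ball_ /= => hy.
apply: le_lt_trans (isnorm_dist _ _) _; apply: le_lt_trans (HC _) _.
by rewrite -ltr_pdivlMl // mulrC.
Qed.

Context {wp : 'rV[R]_n -> 'rV[R]_n -> R}.
Hypotheses (hwp : is_weak_pairing wp) (hc : wp_compatible wp N).

Lemma wp_le_norm x y : wp x y <= N x * N y.
Proof.
case: hwp => _ _ _ _ cs; apply: le_trans (ler_norm _) _; apply: le_trans (cs x y) _.
by rewrite !hc !sqrtr_sqr !ger0_norm ?isnorm_ge0.
Qed.

Lemma wpDl x1 x2 y : wp (x1 + x2) y <= wp x1 y + wp x2 y.
Proof. by case: hwp => [[h _]] _ _ _ _. Qed.

Lemma wpZl a x y : 0 <= a -> wp (a *: x) y = a * wp x y.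
Proof. by case: hwp => _ h _ _ _ /(h _ x y) []. Qed.

Lemma wp_continuousl y : continuous (fun x => wp x y).
Proof. by case: hwp => [[_ h]] _ _ _ _. Qed.

(* Writing [e t = e (t - h) + h v] with [v] close to [d], compatibility and
   sub-additivity give [N (e t)^2 <= N (e (t - h)) N (e t) + h wp v (e t)]. *)
Lemma left_dini_norm_le (e : R -> 'rV[R]_n) t d eps :
  is_derive t (1 : R) e d -> e t != 0 -> 0 < eps ->
  exists2 del, 0 < del & forall h, 0 < h -> h < del ->
    N (e t) - N (e (t - h)) <= h * (wp d (e t) / N (e t) + eps).
Proof.
move=> ed et0 e0.
set y := e t.
have Ny0 : 0 < N y by apply: isnorm_gt0.
have eN0 : 0 < eps * N y by apply: mulr_gt0.
have := wp_continuousl y d.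
move/(@cvgrPdist_lt _ _ _ (nbhs d) _) => /(_ _ eN0) /nbhs_ballP [d1 d10 Hd1].
have [del del0 Hdel] := is_derive_left_quotient ed d10.
exists del => // h h0 hdel.
set v := h^-1 *: (y - e (t - h)).
have hv : wp v y < wp d y + eps * N y.
  have : ball d d1 v by rewrite -ball_normE /ball_ /=; apply: Hdel.
  move/Hd1; rewrite /= ltr_norml => /andP[h1 _]; lra.
have ev : e (t - h) + h *: v = y.
  by rewrite /v scalerA divff ?gt_eqF // scale1r addrC subrK.
have key : N y * N y <= N (e (t - h)) * N y + h * (wp d y + eps * N y).
  rewrite -expr2 -hc -{1}ev; apply: le_trans (wpDl _ _ _) _.
  apply: lerD; first exact: wp_le_norm.
  by rewrite wpZl ?(ltW h0) //; apply: ler_wpM2l; exact: ltW.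
rewrite -(ler_pM2r Ny0).
have -> : h * (wp d y / N y + eps) * N y = h * (wp d y + eps * N y).
  by field; rewrite gt_eqF.
lra.
Qed.

End Norms.

(* On an interval where the inputs [z], [zb] are frozen, the distance of two
   trajectories obeys [D^- N(x - xb) <= c N(x - xb) + a N(z - zb)]. *)
Lemma frozen_input_estimate {R : realType} {nx nz : nat}
    {Nx : 'rV[R]_nx -> R} {Nz : 'rV[R]_nz -> R}
    {wp : 'rV[R]_nx -> 'rV[R]_nx -> R}
    {X : set 'rV[R]_nx} {Z : set 'rV[R]_nz}
    {f : 'rV[R]_nx -> 'rV[R]_nz -> 'rV[R]_nx} {c a : R} :
  is_norm Nx -> is_norm Nz -> is_weak_pairing wp -> wp_compatible wp Nx ->
  c < 0 -> 0 <= a ->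
  (forall x1 x2 z, X x1 -> X x2 -> Z z -> x1 != x2 ->
     wp (f x1 z - f x2 z) (x1 - x2) <= c * Nx (x1 - x2) ^+ 2) ->
  (forall x z1 z2, X x -> Z z1 -> Z z2 ->
     Nx (f x z1 - f x z2) <= a * Nz (z1 - z2)) ->
  forall (x xb : R -> 'rV[R]_nx) (z zb : 'rV[R]_nz) (t0 t1 : R),
  t0 <= t1 ->
  {within `[t0, t1], continuous x} -> {within `[t0, t1], continuous xb} ->
  Z z -> Z zb ->
  (forall t, t0 < t -> t < t1 -> [/\ X (x t), X (xb t),
      is_derive t (1 : R) x (f (x t) z) & is_derive t (1 : R) xb (f (xb t) zb)]) ->
  Nx (x t1 - xb t1) <= expR (c * (t1 - t0)) * Nx (x t0 - xb t0)
     + (1 - expR (c * (t1 - t0))) * (a * Nz (z - zb) / - c).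
Proof.
move=> hNx hNz hwp hc c0 a0 HosL HLf x xb z zb t0 t1 t01 xc xbc Zz Zzb Hs.
apply: (@left_dini_comparison R (fun t => Nx (x t - xb t))) => //.
  apply/subspace_continuousP => s As.
  apply: (continuous_cvg _ (isnorm_continuous hNx _)).
  by apply: cvgB; [move/subspace_continuousP: xc | move/subspace_continuousP: xbc]; apply.
move=> t tt0 tt1 eps e0.
have [Xx Xxb dx dxb] := Hs t tt0 tt1.
have [et0|et0] := eqVneq (x t - xb t) 0.
  exists 1 => // h h0 _; rewrite et0 isnorm0 // mulr0.
  have := isnorm_ge0 hNx (x (t - h) - xb (t - h)).
  have : 0 <= h * (a * Nz (z - zb) + eps).
    by rewrite mulr_ge0 ?addr_ge0 ?mulr_ge0 ?(isnorm_ge0 hNz) ?(ltW h0) ?(ltW e0).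
  lra.
have [del del0 Hdel] :=
  left_dini_norm_le hNx hwp hc (x - xb) _ _ _ (is_deriveB dx dxb) et0 e0.
exists del => // h h0 hd; apply: (le_trans (Hdel h h0 hd)).
rewrite ler_wpM2l ?(ltW h0) // lerD2r.
set d := x t - xb t.
have Nd0 : 0 < Nx d by apply: isnorm_gt0.
rewrite ler_pdivrMr //.
have split_inputs : f (x t) z - f (xb t) zb
    = (f (x t) z - f (xb t) z) + (f (xb t) z - f (xb t) zb).
  by rewrite addrA subrK.
have -> : (x - xb) t = d by [].
rewrite split_inputs; apply: le_trans (wpDl hwp _ _ _) _.
rewrite mulrDl -mulrA -expr2; apply: lerD.
  by apply: HosL => //; rewrite -subr_eq0.
apply: le_trans (wp_le_norm hNx hwp hc _ _) _.
by apply: ler_wpM2r; [exact: isnorm_ge0 | exact: HLf].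
Qed.

(** * Contraction of weighted quadratic forms *)

Lemma sqr_weighted_sum_le (R : realFieldType) (A1 A2 w1 w2 : R) :
  0 <= A1 -> 0 <= A2 ->
  (A1 * w1 + A2 * w2) ^+ 2 <= (A1 + A2) * (A1 * w1 ^+ 2 + A2 * w2 ^+ 2).
Proof.
move=> a1 a2; rewrite -subr_ge0.
have -> : (A1 + A2) * (A1 * w1 ^+ 2 + A2 * w2 ^+ 2) - (A1 * w1 + A2 * w2) ^+ 2
    = A1 * A2 * (w1 - w2) ^+ 2 by ring.
by apply: mulr_ge0; [exact: mulr_ge0 | exact: sqr_ge0].
Qed.

Lemma sqr_row_le {R : realFieldType} {m1 m2 u1 u2 y1 y2 z rho : R} :
  0 <= m1 -> 0 <= m2 -> 0 < u1 -> 0 < u2 ->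
  m1 * u1 + m2 * u2 <= rho -> 0 <= z -> z <= m1 * y1 + m2 * y2 ->
  z ^+ 2 <= rho * (m1 * (y1 ^+ 2 / u1) + m2 * (y2 ^+ 2 / u2)).
Proof.
move=> m10 m20 u10 u20 hr z0 hz.
have u1n : u1 != 0 by rewrite gt_eqF.
have u2n : u2 != 0 by rewrite gt_eqF.
have := @sqr_weighted_sum_le R (m1 * u1) (m2 * u2) (y1 / u1) (y2 / u2)
  (mulr_ge0 m10 (ltW u10)) (mulr_ge0 m20 (ltW u20)).
have -> : m1 * u1 * (y1 / u1) = m1 * y1 by field.
have -> : m2 * u2 * (y2 / u2) = m2 * y2 by field.
have -> : m1 * u1 * (y1 / u1) ^+ 2 = m1 * (y1 ^+ 2 / u1) by field.
have -> : m2 * u2 * (y2 / u2) ^+ 2 = m2 * (y2 ^+ 2 / u2) by field.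
move=> h; apply: le_trans (le_trans h _).
  by rewrite !expr2; apply: ler_pM => //; apply: le_trans hz.
by rewrite ler_wpM2r // addr_ge0 // mulr_ge0 // divr_ge0 ?sqr_ge0 // ltW.
Qed.

Lemma subeigen_weighted_sq_le {R : realFieldType}
    {m11 m12 m21 m22 u1 u2 v1 v2 rho y1 y2 z1 z2 : R} :
  0 <= m11 -> 0 <= m12 -> 0 <= m21 -> 0 <= m22 ->
  0 < u1 -> 0 < u2 -> 0 < v1 -> 0 < v2 -> 0 <= rho ->
  m11 * u1 + m12 * u2 <= rho * u1 -> m21 * u1 + m22 * u2 <= rho * u2 ->
  v1 * m11 + v2 * m21 <= rho * v1 -> v1 * m12 + v2 * m22 <= rho * v2 ->
  0 <= z1 -> z1 <= m11 * y1 + m12 * y2 -> 0 <= z2 -> z2 <= m21 * y1 + m22 * y2 ->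
  v1 / u1 * z1 ^+ 2 + v2 / u2 * z2 ^+ 2
    <= rho ^+ 2 * (v1 / u1 * y1 ^+ 2 + v2 / u2 * y2 ^+ 2).
Proof.
move=> h11 h12 h21 h22 u10 u20 v10 v20 r0 hu1 hu2 hv1 hv2 z10 hz1 z20 hz2.
have u1n : u1 != 0 by rewrite gt_eqF.
have u2n : u2 != 0 by rewrite gt_eqF.
have r1 := sqr_row_le h11 h12 u10 u20 hu1 z10 hz1.
have r2 := sqr_row_le h21 h22 u10 u20 hu2 z20 hz2.
set Y1 := y1 ^+ 2 / u1 in r1 r2 *.
set Y2 := y2 ^+ 2 / u2 in r1 r2 *.
have Y10 : 0 <= Y1 by rewrite /Y1 divr_ge0 ?sqr_ge0 // ltW.
have Y20 : 0 <= Y2 by rewrite /Y2 divr_ge0 ?sqr_ge0 // ltW.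
have a1 : v1 / u1 * z1 ^+ 2 <= rho * (v1 * m11 * Y1 + v1 * m12 * Y2).
  have -> : rho * (v1 * m11 * Y1 + v1 * m12 * Y2)
      = v1 / u1 * (rho * u1 * (m11 * Y1 + m12 * Y2)) by field.
  by apply: ler_wpM2l => //; rewrite divr_ge0 // ltW.
have a2 : v2 / u2 * z2 ^+ 2 <= rho * (v2 * m21 * Y1 + v2 * m22 * Y2).
  have -> : rho * (v2 * m21 * Y1 + v2 * m22 * Y2)
      = v2 / u2 * (rho * u2 * (m21 * Y1 + m22 * Y2)) by field.
  by apply: ler_wpM2l => //; rewrite divr_ge0 // ltW.
have b1 : rho * ((v1 * m11 + v2 * m21) * Y1) <= rho * (rho * v1 * Y1).
  by apply: ler_wpM2l => //; apply: ler_wpM2r.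
have b2 : rho * ((v1 * m12 + v2 * m22) * Y2) <= rho * (rho * v2 * Y2).
  by apply: ler_wpM2l => //; apply: ler_wpM2r.
have -> : rho ^+ 2 * (v1 / u1 * y1 ^+ 2 + v2 / u2 * y2 ^+ 2)
    = rho * (rho * v1 * Y1) + rho * (rho * v2 * Y2).
  by rewrite /Y1 /Y2; field; rewrite u1n u2n.
have : rho * (v1 * m11 * Y1 + v1 * m12 * Y2) + rho * (v2 * m21 * Y1 + v2 * m22 * Y2)
    = rho * ((v1 * m11 + v2 * m21) * Y1) + rho * ((v1 * m12 + v2 * m22) * Y2) by ring.
lra.
Qed.

(* The matrix [[al, be]; [de al, p + de be]] is nonnegative with
   [det (1 - M) > 0] and diagonal below [1]; its strict sub-eigenvectors
   [(u1, 1)] and [(v1, 1)] are found in nonempty open intervals, and [rho] is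
   the largest of the four resulting ratios. *)
Lemma subeigen_weights_exist {R : realFieldType} {al be de p : R} :
  0 < al -> al < 1 -> 0 < be -> 0 < de -> 0 <= p -> p < 1 ->
  de * be < (1 - al) * (1 - p) ->
  exists u1 v1 rho : R, [/\ 0 < u1, 0 < v1, 0 < rho, rho < 1 &
   [/\ al * u1 + be * 1 <= rho * u1, de * al * u1 + (p + de * be) * 1 <= rho * 1,
       v1 * al + 1 * (de * al) <= rho * v1 & v1 * be + 1 * (p + de * be) <= rho * 1]].
Proof.
move=> a0 a1 b0 d0 p0 p1 hc.
have da0 : 0 < de * al by apply: mulr_gt0.
have a1' : 0 < 1 - al by lra.
have mid (L U : R) : L < U -> exists w, L < w < U.
  by move=> LU; exists ((L + U) / 2); apply/andP; split; lra.
have [u1 /andP[u1L u1U]] : exists u1, be / (1 - al) < u1 < (1 - p - de * be) / (de * al).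
  apply: mid; rewrite ltr_pdivrMr // mulrAC ltr_pdivlMr //; nra.
have [v1 /andP[v1L v1U]] : exists v1, de * al / (1 - al) < v1 < (1 - p - de * be) / be.
  apply: mid; rewrite ltr_pdivrMr // mulrAC ltr_pdivlMr //; nra.
rewrite ltr_pdivrMr // in u1L; rewrite ltr_pdivlMr // in u1U.
rewrite ltr_pdivrMr // in v1L; rewrite ltr_pdivlMr // in v1U.
have u10 : 0 < u1 by nra.
have v10 : 0 < v1 by nra.
pose r1 := (al * u1 + be) / u1; pose r3 := (v1 * al + de * al) / v1.
have r1l : r1 < 1 by rewrite /r1 ltr_pdivrMr // mul1r; nra.
have r3l : r3 < 1 by rewrite /r3 ltr_pdivrMr // mul1r; nra.
have er1 : r1 * u1 = al * u1 + be by rewrite /r1 divfK // gt_eqF.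
have er3 : r3 * v1 = v1 * al + de * al by rewrite /r3 divfK // gt_eqF.
pose rho := Num.max (Num.max r1 (de * al * u1 + (p + de * be)))
                    (Num.max r3 (v1 * be + (p + de * be))).
exists u1, v1, rho; split => //.
- rewrite /rho !lt_max; apply/orP; left; apply/orP; right.
  have : 0 < de * al * u1 by rewrite !mulr_gt0.
  have : 0 < de * be by rewrite mulr_gt0.
  lra.
- by rewrite /rho !gt_max r1l r3l /=; nra.
rewrite !mulr1 !mul1r; split.
- by rewrite -er1 ler_pM2r // /rho !le_max lexx.
- by rewrite /rho !le_max lexx !orbT.
- by rewrite -er3 ler_pM2r // /rho !le_max lexx !orbT.
- by rewrite /rho !le_max lexx !orbT.
Qed.

Lemma geom_sum_ge1 {R : realDomainType} {g : R} {m : nat} :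
  0 <= g -> (0 < m)%N -> 1 <= \sum_(i < m) g ^+ i.
Proof.
move=> g0; case: m => // m _; rewrite big_ord_recl expr0 lerDl.
by apply: sumr_ge0 => i _; exact: exprn_ge0.
Qed.

Lemma geom_sumS {R : pzSemiRingType} (g : R) m :
  \sum_(i < m.+1) g ^+ i = 1 + g * \sum_(i < m) g ^+ i.
Proof.
rewrite big_ord_recl expr0 mulr_sumr; congr (_ + _).
by apply: eq_bigr => i _; rewrite -exprS.
Qed.

Lemma iter_Lipschitz {R : realType} {nx nz : nat}
    {Nx : 'rV[R]_nx -> R} {Nz : 'rV[R]_nz -> R}
    {X : set 'rV[R]_nx} {Z : set 'rV[R]_nz}
    {G : 'rV[R]_nx -> 'rV[R]_nz -> 'rV[R]_nz} {g gam : R} :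
  is_norm Nz -> 0 <= gam ->
  (forall x z, X x -> Z z -> Z (G x z)) ->
  (forall x1 x2 z, X x1 -> X x2 -> Z z -> Nz (G x1 z - G x2 z) <= g * Nx (x1 - x2)) ->
  (forall x z1 z2, X x -> Z z1 -> Z z2 -> Nz (G x z1 - G x z2) <= gam * Nz (z1 - z2)) ->
  forall m x x' z z', X x -> X x' -> Z z -> Z z' ->
   Nz (iter m (G x) z - iter m (G x') z')
     <= gam ^+ m * Nz (z - z') + g * (\sum_(i < m) gam ^+ i) * Nx (x - x').
Proof.
move=> hNz gam0 ZG HGx HGz m x x' z z' Xx Xx' Zz Zz'.
have Ziter y w k : X y -> Z w -> Z (iter k (G y) w).
  by move=> Xy Zw; elim: k => //= k ih; exact: ZG.
elim: m => [|m ih] /=; first by rewrite expr0 mul1r big_ord0 mulr0 mul0r addr0.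
set w := iter m (G x) z; set w' := iter m (G x') z'.
have -> : G x w - G x' w' = (G x w - G x' w) + (G x' w - G x' w').
  by rewrite addrA subrK.
apply: le_trans (isnormD hNz _ _) _.
have h1 := HGx x x' _ Xx Xx' (Ziter _ _ m Xx Zz).
have h2 := HGz x' _ _ Xx' (Ziter _ _ m Xx Zz) (Ziter _ _ m Xx' Zz').
have h3 := ler_wpM2l gam0 ih.
apply: le_trans (lerD h1 (le_trans h2 h3)) _.
by rewrite geom_sumS exprS -/w -/w' le_eqVlt; apply/orP; left; apply/eqP; ring.
Qed.

Lemma z_of_sample {R : realType} {nz : nat} {T : R} (zd : nat -> 'rV[R]_nz) (k : nat) :
  0 < T -> z_of T zd (k%:R * T) = zd k.
Proof. by move=> T0; rewrite /z_of /samp_index mulfK ?gt_eqF // natrK. Qed.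

Lemma ereal_finite {R : realType} {e : \bar R} :
  (-oo < e)%E -> (e < +oo)%E -> exists r, e = r%:E.
Proof. by case: e => [r| |] //; exists r. Qed.

Lemma ereal_sup_nonempty (R : realType) (S : set (\bar R)) :
  ereal_sup S <> -oo%E -> exists e, S e.
Proof.
move=> H; apply: contrapT => H'; apply: H.
have -> : S = set0 by apply/seteqP; split => // e Se; apply: H'; exists e.
exact: ereal_sup0.
Qed.

Section LipschitzConstants.
Context {R : realType} {m p q : nat}.

Lemma Lip_fst_le {N1 : 'rV[R]_m -> R} {N2 : 'rV[R]_q -> R} {A B}
    {F : 'rV[R]_m -> 'rV[R]_p -> 'rV[R]_q} {a : R} :
  is_norm N1 -> is_norm N2 -> Lip_fst N1 N2 A B F = a%:E ->
  forall a1 a2 b, A a1 -> A a2 -> B b -> N2 (F a1 b - F a2 b) <= a * N1 (a1 - a2).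
Proof.
move=> h1 h2 La a1 a2 b Aa1 Aa2 Bb.
have [->|ne] := eqVneq a1 a2; first by rewrite !subrr (isnorm0 h1) (isnorm0 h2) mulr0.
have N10 : 0 < N1 (a1 - a2) by apply: isnorm_gt0 => //; rewrite subr_eq0.
rewrite -ler_pdivrMr // -lee_fin -La.
by apply: ereal_sup_ubound; exists a1, a2, b.
Qed.

Lemma Lip_snd_le {N1 : 'rV[R]_p -> R} {N2 : 'rV[R]_q -> R} {A B}
    {F : 'rV[R]_m -> 'rV[R]_p -> 'rV[R]_q} {a : R} :
  is_norm N1 -> is_norm N2 -> Lip_snd N1 N2 A B F = a%:E ->
  forall x b1 b2, A x -> B b1 -> B b2 -> N2 (F x b1 - F x b2) <= a * N1 (b1 - b2).
Proof.
move=> h1 h2 La x b1 b2 Ax Bb1 Bb2.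
have [->|ne] := eqVneq b1 b2; first by rewrite !subrr (isnorm0 h1) (isnorm0 h2) mulr0.
have N10 : 0 < N1 (b1 - b2) by apply: isnorm_gt0 => //; rewrite subr_eq0.
rewrite -ler_pdivrMr // -lee_fin -La.
by apply: ereal_sup_ubound; exists x, b1, b2.
Qed.

Lemma Lip_fst_pairs {N1 : 'rV[R]_m -> R} {N2 : 'rV[R]_q -> R} {A B}
    {F : 'rV[R]_m -> 'rV[R]_p -> 'rV[R]_q} :
  Lip_fst N1 N2 A B F <> -oo%E ->
  exists a1 a2 b, [/\ A a1, A a2, B b & a1 != a2].
Proof.
by move=> /ereal_sup_nonempty [e [a1 [a2 [b [? ? ? ? _]]]]]; exists a1, a2, b.
Qed.

Lemma Lip_snd_pairs {N1 : 'rV[R]_p -> R} {N2 : 'rV[R]_q -> R} {A B}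
    {F : 'rV[R]_m -> 'rV[R]_p -> 'rV[R]_q} :
  Lip_snd N1 N2 A B F <> -oo%E ->
  exists a b1 b2, [/\ A a, B b1, B b2 & b1 != b2].
Proof.
by move=> /ereal_sup_nonempty [e [a [b1 [b2 [? ? ? ? _]]]]]; exists a, b1, b2.
Qed.

Lemma Lip_snd_ge0 {N1 : 'rV[R]_p -> R} {N2 : 'rV[R]_q -> R} {A B}
    {F : 'rV[R]_m -> 'rV[R]_p -> 'rV[R]_q} :
  is_norm N1 -> is_norm N2 -> (exists a b1 b2, [/\ A a, B b1, B b2 & b1 != b2]) ->
  (0 <= Lip_snd N1 N2 A B F)%E.
Proof.
move=> h1 h2 [a [b1 [b2 [Aa Bb1 Bb2 b12]]]].
apply: le_trans (ereal_sup_ubound _); last by exists a, b1, b2.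
by rewrite lee_fin divr_ge0 // isnorm_ge0.
Qed.
End LipschitzConstants.

Section OneSidedLipschitz.
Context {R : realType} {nx nz : nat} {wp : 'rV[R]_nx -> 'rV[R]_nx -> R}
  {N : 'rV[R]_nx -> R} {X : set 'rV[R]_nx} {Z : set 'rV[R]_nz}
  {f : 'rV[R]_nx -> 'rV[R]_nz -> 'rV[R]_nx}.
Hypothesis hN : is_norm N.

Lemma osLip_x_le {c : R} : osLip_x wp N X Z f = c%:E ->
  forall x1 x2 z, X x1 -> X x2 -> Z z -> x1 != x2 ->
    wp (f x1 z - f x2 z) (x1 - x2) <= c * N (x1 - x2) ^+ 2.
Proof.
move=> Lc x1 x2 z X1 X2 Zz ne.
have N0' : 0 < N (x1 - x2) ^+ 2 by rewrite exprn_gt0 // isnorm_gt0 // subr_eq0.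
rewrite -ler_pdivrMr // -lee_fin -Lc.
by apply: ereal_sup_ubound; exists x1, x2, z.
Qed.

Lemma osLip_x_gtNy : (exists x1 x2 z, [/\ X x1, X x2, Z z & x1 != x2]) ->
  (-oo < osLip_x wp N X Z f)%E.
Proof.
move=> [x1 [x2 [z [X1 X2 Zz ne]]]].
by apply: lt_le_trans (ltNyr _) (ereal_sup_ubound _); exists x1, x2, z.
Qed.

Hypotheses (hwp : is_weak_pairing wp) (hc : wp_compatible wp N).

Lemma osLip_x_le_Lip_fst : (osLip_x wp N X Z f <= Lip_fst N N X Z f)%E.
Proof.
apply: ge_ereal_sup => e [x1 [x2 [z [X1 X2 Zz ne ->]]]].
apply: le_trans (ereal_sup_ubound _) ; last by exists x1, x2, z.
have N0' : 0 < N (x1 - x2) by rewrite isnorm_gt0 // subr_eq0.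
rewrite lee_fin ler_pdivrMr ?exprn_gt0 // expr2 mulrA divfK ?gt_eqF //.
exact: wp_le_norm.
Qed.
End OneSidedLipschitz.

(** * The sampled-data interconnection *)

Lemma samp_index_itv {R : realType} {T t : R} : 0 < T -> 0 <= t ->
  (samp_index T t)%:R * T <= t < (samp_index T t).+1%:R * T.
Proof.
move=> T0 t0; have /andP[h1 h2] := truncn_itv (divr_ge0 t0 (ltW T0)).
by rewrite -ler_pdivlMr // h1 -ltr_pdivrMr.
Qed.

Lemma sq_intersample_le {R : realFieldType} {eta A At W K : R} :
  0 < eta -> 0 <= A -> 0 <= W -> 0 <= K -> 0 <= At -> At <= A + K * W ->
  eta * At ^+ 2 + 1 * W ^+ 2 <= (2 + 2 * eta * K ^+ 2) * (eta * A ^+ 2 + 1 * W ^+ 2).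
Proof.
move=> eta0 A0 W0 K0 At0 hAt.
have h1 : At ^+ 2 <= (A + K * W) ^+ 2 by rewrite !expr2 ler_pM.
have h2 : (A + K * W) ^+ 2 <= 2 * A ^+ 2 + 2 * (K * W) ^+ 2.
  by have := sqr_ge0 (A - K * W); rewrite !expr2; lra.
have h3 : eta * At ^+ 2 <= eta * (2 * A ^+ 2 + 2 * (K * W) ^+ 2).
  by rewrite ler_pM2l //; exact: le_trans h1 h2.
have h4 : 0 <= eta * K ^+ 2 * eta * A ^+ 2.
  by rewrite !mulr_ge0 ?sqr_ge0 ?(ltW eta0).
have h5 := sqr_ge0 W.
have q1 : (2 + 2 * eta * K ^+ 2) * (eta * A ^+ 2 + 1 * W ^+ 2)
    = 2 * eta * A ^+ 2 + 2 * (eta * K ^+ 2 * eta * A ^+ 2) + 2 * W ^+ 2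
      + 2 * eta * (K ^+ 2 * W ^+ 2) by ring.
have q2 : eta * (2 * A ^+ 2 + 2 * (K * W) ^+ 2)
    = 2 * eta * A ^+ 2 + 2 * eta * (K ^+ 2 * W ^+ 2) by ring.
lra.
Qed.

Lemma expn_samp_index_le (R : realType) (T rho t : R) :
  0 < T -> 0 < rho -> rho < 1 -> 0 <= t ->
  rho ^+ samp_index T t <= expR (- (- ln rho / T * t)) / rho.
Proof.
move=> T0 r0 r1 t0.
have /andP[_ hk] := samp_index_itv T0 t0.
have hk' : t / T - 1 <= (samp_index T t)%:R.
  by move: hk; rewrite -ltr_pdivrMr // -natr1; lra.
have -> : rho ^+ samp_index T t = expR ((samp_index T t)%:R * ln rho).
  by rewrite mulr_natl -lnXn // lnK // posrE exprn_gt0.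
have -> : expR (- (- ln rho / T * t)) / rho = expR ((t / T - 1) * ln rho).
  rewrite (_ : (t / T - 1) * ln rho = - (- ln rho / T * t) + - ln rho).
    by rewrite expRD [expR (- ln rho)]expRN lnK ?posrE.
  by field; rewrite gt_eqF.
by rewrite ler_expR ler_wnM2r // ltW // ln_lt0 // r0 r1.
Qed.

Section SampledData.
Context {R : realType} {nx nz : nat} {Nx : 'rV[R]_nx -> R} {Nz : 'rV[R]_nz -> R}
  {wp : 'rV[R]_nx -> 'rV[R]_nx -> R} {X : set 'rV[R]_nx} {Z : set 'rV[R]_nz}
  {f : 'rV[R]_nx -> 'rV[R]_nz -> 'rV[R]_nx} {G : 'rV[R]_nx -> 'rV[R]_nz -> 'rV[R]_nz}
  {n : nat} {T : R}.

Definition sampled_contractive (eta1 eta2 b : R) : Prop :=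
  forall x zm1 zd xb zm1b zdb,
    is_solution f G n T x zm1 zd -> X (x 0) -> Z zm1 ->
    is_solution f G n T xb zm1b zdb -> X (xb 0) -> Z zm1b ->
    forall k : nat,
      cmp_norm Nx Nz eta1 eta2 (x (k%:R * T) - xb (k%:R * T))
               (z_of T zd (k%:R * T) - z_of T zdb (k%:R * T))
      <= b ^+ k * cmp_norm Nx Nz eta1 eta2 (x 0 - xb 0)
                    (z_of T zd 0 - z_of T zdb 0).

Hypotheses (hNx : is_norm Nx) (hNz : is_norm Nz)
  (hwp : is_weak_pairing wp) (hc : wp_compatible wp Nx)
  (ZG : forall x z, X x -> Z z -> Z (G x z)) (T0 : 0 < T)
  (Hinv : forall x zm1 zd, is_solution f G n T x zm1 zd -> X (x 0) -> Z zm1 ->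
     forall t, 0 <= t -> X (x t) /\ Z (z_of T zd t)).

Context {c a g gam : R}.
Hypotheses (c0 : c < 0) (a0 : 0 <= a) (g0 : 0 <= g) (gam0 : 0 <= gam)
  (HosL : forall x1 x2 z, X x1 -> X x2 -> Z z -> x1 != x2 ->
     wp (f x1 z - f x2 z) (x1 - x2) <= c * Nx (x1 - x2) ^+ 2)
  (HLf : forall x z1 z2, X x -> Z z1 -> Z z2 ->
     Nx (f x z1 - f x z2) <= a * Nz (z1 - z2))
  (HGx : forall x1 x2 z, X x1 -> X x2 -> Z z ->
     Nz (G x1 z - G x2 z) <= g * Nx (x1 - x2))
  (HGz : forall x z1 z2, X x -> Z z1 -> Z z2 ->
     Nz (G x z1 - G x z2) <= gam * Nz (z1 - z2)).

(* Over one period the pair (|dx(kT)|, |dz_k|) is bounded by the nonnegative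
   matrix [[al, be]; [de al, gam^n + de be]] applied to its previous value. *)
Let al := expR (c * T).
Let be := (1 - al) * (a / - c).
Let de := g * \sum_(i < n) gam ^+ i.

Section TwoSolutions.
Context {x xb : R -> 'rV[R]_nx} {zm1 zm1b : 'rV[R]_nz} {zd zdb : nat -> 'rV[R]_nz}.
Hypotheses (sol : is_solution f G n T x zm1 zd) (Xx0 : X (x 0)) (Zm1 : Z zm1)
  (solb : is_solution f G n T xb zm1b zdb) (Xxb0 : X (xb 0)) (Zm1b : Z zm1b).

Lemma solutions_in_X {t} : 0 <= t -> X (x t) /\ X (xb t).
Proof. by move=> t0; split; [case: (Hinv _ _ _ sol Xx0 Zm1 _ t0) | case: (Hinv _ _ _ solb Xxb0 Zm1b _ t0)]. Qed.

Lemma samples_in_Z k : Z (zd k) /\ Z (zdb k).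
Proof.
have kT0 : 0 <= k%:R * T by rewrite mulr_ge0 // ltW.
have [_ Zk] := Hinv _ _ _ sol Xx0 Zm1 _ kT0.
have [_ Zbk] := Hinv _ _ _ solb Xxb0 Zm1b _ kT0.
by rewrite !(z_of_sample _ _ T0) in Zk Zbk.
Qed.

Lemma sampling_interval_estimate {k : nat} {t0 t1 : R} :
  k%:R * T <= t0 -> t0 <= t1 -> t1 <= k.+1%:R * T ->
  Nx (x t1 - xb t1) <= expR (c * (t1 - t0)) * Nx (x t0 - xb t0)
     + (1 - expR (c * (t1 - t0))) * (a * Nz (zd k - zdb k) / - c).
Proof.
move=> kt0 t01 t1k.
have k0 : 0 <= k%:R * T by rewrite mulr_ge0 // ltW.
have sub : [set` `[t0, t1]] `<=` [set t : R | 0 <= t].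
  by move=> t; rewrite /= in_itv /= => /andP[h _]; lra.
case: (sol) => xc _ xd; case: (solb) => xbc _ xbd.
have [Zk Zbk] := samples_in_Z k.
apply: (frozen_input_estimate hNx hNz hwp hc c0 a0 HosL HLf) => //.
- exact: continuous_subspaceW sub xc.
- exact: continuous_subspaceW sub xbc.
move=> t tt0 tt1.
have t0' : 0 <= t by lra.
have [Xt Xbt] := solutions_in_X t0'.
have ktt : k%:R * T < t < k.+1%:R * T by apply/andP; split; lra.
by split => //; [exact: xd | exact: xbd].
Qed.

Lemma sample_x_step k :
  Nx (x (k.+1%:R * T) - xb (k.+1%:R * T))
    <= al * Nx (x (k%:R * T) - xb (k%:R * T)) + be * Nz (zd k - zdb k).
Proof.
have kT1 : k%:R * T <= k.+1%:R * T by rewrite ler_pM2r // ler_nat.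
have := sampling_interval_estimate (lexx _) kT1 (lexx _).
have -> : k.+1%:R * T - k%:R * T = T by rewrite -natr1; ring.
move=> h; apply: (le_trans h); rewrite /be /al le_eqVlt; apply/orP; left; apply/eqP; ring.
Qed.

Lemma sample_z_step k :
  Nz (zd k.+1 - zdb k.+1)
    <= gam ^+ n * Nz (zd k - zdb k) + de * Nx (x (k.+1%:R * T) - xb (k.+1%:R * T)).
Proof.
case: (sol) => _ zdd _; case: (solb) => _ zdbd _.
have k1T0 : 0 <= k.+1%:R * T by rewrite mulr_ge0 // ltW.
have [Xk1 Xbk1] := solutions_in_X k1T0.
have [Zk Zbk] := samples_in_Z k.
rewrite (zdd k.+1) (zdbd k.+1) /de.
exact: (iter_Lipschitz hNz gam0 ZG HGx HGz).
Qed.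

Context {u1 v1 rho : R}.
Hypotheses (u10 : 0 < u1) (v10 : 0 < v1) (rho0 : 0 <= rho)
  (hu1 : al * u1 + be * 1 <= rho * u1)
  (hu2 : de * al * u1 + (gam ^+ n + de * be) * 1 <= rho * 1)
  (hv1 : v1 * al + 1 * (de * al) <= rho * v1)
  (hv2 : v1 * be + 1 * (gam ^+ n + de * be) <= rho * 1).

Let Q k := v1 / u1 * Nx (x (k%:R * T) - xb (k%:R * T)) ^+ 2
           + 1 * Nz (zd k - zdb k) ^+ 2.

Lemma sample_sq_step k : Q k.+1 <= rho ^+ 2 * Q k.
Proof.
have al0 : 0 <= al by exact: expR_ge0.
have al1 : al <= 1 by rewrite /al expR_le1 nmulr_rle0 // ltW.
have be0 : 0 <= be.
  by apply: mulr_ge0; rewrite ?subr_ge0 // divr_ge0 // oppr_ge0 (ltW c0).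
have de0 : 0 <= de.
  by rewrite /de mulr_ge0 // sumr_ge0 // => i _; exact: exprn_ge0.
have hx := sample_x_step k.
have hz := sample_z_step k.
have hz2 : Nz (zd k.+1 - zdb k.+1) <= de * al * Nx (x (k%:R * T) - xb (k%:R * T))
                                 + (gam ^+ n + de * be) * Nz (zd k - zdb k).
  have := ler_wpM2l de0 hx; lra.
have := subeigen_weighted_sq_le al0 be0 (mulr_ge0 de0 al0)
  (addr_ge0 (exprn_ge0 _ gam0) (mulr_ge0 de0 be0)) u10 ltr01 v10 ltr01 rho0
  hu1 hu2 hv1 hv2 (isnorm_ge0 hNx _) hx (isnorm_ge0 hNz _) hz2.
by rewrite !divr1.
Qed.

Lemma sample_sq_contraction k : Q k <= (rho ^+ 2) ^+ k * Q 0.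
Proof.
elim: k => [|k ih]; first by rewrite expr0 mul1r.
apply: le_trans (sample_sq_step k) _.
by rewrite [(rho ^+ 2) ^+ k.+1]exprS -mulrA; apply: ler_wpM2l; rewrite ?exprn_ge0.
Qed.

Lemma sample_cmp_contraction k :
  cmp_norm Nx Nz (v1 / u1) 1 (x (k%:R * T) - xb (k%:R * T))
           (z_of T zd (k%:R * T) - z_of T zdb (k%:R * T))
  <= rho ^+ k * cmp_norm Nx Nz (v1 / u1) 1 (x 0 - xb 0)
                  (z_of T zd 0 - z_of T zdb 0).
Proof.
have z_of0 (zs : nat -> 'rV[R]_nz) : z_of T zs 0 = zs 0%N.
  by rewrite -(mul0r T) -[0 : R]/(0%:R) (z_of_sample _ _ T0).
rewrite /cmp_norm !(z_of_sample _ _ T0) !z_of0 -[0 : R](mul0r T).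
apply: le_trans (ler_wsqrtr (sample_sq_contraction k)) _.
rewrite exprAC sqrtrM ?sqr_ge0 // sqrtr_sqr ger0_norm ?exprn_ge0 //.
Qed.

End TwoSolutions.

Hypotheses (n0 : (0 < n)%N) (gam1 : gam < 1) (a_pos : 0 < a) (g_pos : 0 < g)
  (small_gain : a * g < - c * (1 - gam)).

Lemma sampled_contraction :
  exists2 eta, 0 < eta & exists2 rho, 0 < rho < 1 & sampled_contractive eta 1 rho.
Proof.
have al0 : 0 < al by exact: expR_gt0.
have al1 : al < 1 by rewrite /al expR_lt1 pmulr_llt0.
have be0 : 0 < be by rewrite /be mulr_gt0 ?subr_gt0 // divr_gt0 // oppr_gt0.
have p0 : 0 <= gam ^+ n by exact: exprn_ge0.
have p1 : gam ^+ n < 1 by rewrite exprn_ilt1 // -lt0n.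
have S1 := geom_sum_ge1 gam0 n0.
have de0 : 0 < de by rewrite /de mulr_gt0 //; lra.
have hcond : de * be < (1 - al) * (1 - gam ^+ n).
  have -> : 1 - gam ^+ n = (1 - gam) * \sum_(i < n) gam ^+ i.
    by rewrite -[LHS]opprB subrX1 -mulNr opprB.
  have -> : de * be = ((1 - al) * \sum_(i < n) gam ^+ i) * (g * (a / - c)).
    by rewrite /de /be; ring.
  have -> : (1 - al) * ((1 - gam) * \sum_(i < n) gam ^+ i)
      = ((1 - al) * \sum_(i < n) gam ^+ i) * (1 - gam) by ring.
  rewrite ltr_pM2l; last by rewrite mulr_gt0; lra.
  rewrite mulrA ltr_pdivrMr ?oppr_gt0 // [g * a]mulrC [_ * - c]mulrC.
  exact: small_gain.
have [u1 [v1 [rho [u10 v10 r0 r1 [hu1 hu2 hv1 hv2]]]]] :=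
  subeigen_weights_exist al0 al1 be0 de0 p0 p1 hcond.
exists (v1 / u1); first exact: divr_gt0.
exists rho; first by rewrite r0 r1.
move=> x zm1 zd xb zm1b zdb sol Xx0 Zm1 solb Xxb0 Zm1b k.
exact: (sample_cmp_contraction sol Xx0 Zm1 solb Xxb0 Zm1b
  u10 v10 (ltW r0) hu1 hu2 hv1 hv2).
Qed.

Hypotheses (X0 : X 0) (Z0 : Z 0) (f00 : f 0 0 = 0) (G00 : G 0 0 = 0).

Lemma zero_solution : is_solution f G n T (fun _ => 0) 0 (fun _ => 0).
Proof.
have iter0 m : iter m (G 0) (0 : 'rV[R]_nz) = 0 by elim: m => //= m ->.
split.
- by apply: continuous_subspaceT => y; exact: cvg_cst.
- by case=> [|k]; rewrite iter0.
- by move=> k t _; rewrite f00; exact: is_derive_cst.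
Qed.

Lemma intersample_bound {x zm1 zd t} :
  is_solution f G n T x zm1 zd -> X (x 0) -> Z zm1 -> 0 <= t ->
  Nx (x t) <= Nx (x ((samp_index T t)%:R * T)) + a / - c * Nz (zd (samp_index T t)).
Proof.
move=> sol Xx0 Zm1 t0.
have /andP[hk1 hk2] := samp_index_itv T0 t0.
have := sampling_interval_estimate sol Xx0 Zm1 zero_solution X0 Z0
  (lexx _) hk1 (ltW hk2).
rewrite !subr0 mulrAC; set E := expR _; set A := Nx (x (_ * T)); set K := _ * Nz _.
have E0 : 0 <= E by exact: expR_ge0.
have E1 : E <= 1 by rewrite expR_le1 nmulr_rle0 // subr_ge0.
have A0 : 0 <= A by exact: isnorm_ge0.
have K0 : 0 <= K by rewrite mulr_ge0 ?isnorm_ge0 // divr_ge0 ?oppr_ge0 // ltW.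
have E1' : 1 - E <= 1 by lra.
have := ler_piMl A0 E1; have := ler_piMl K0 E1'.
lra.
Qed.

Lemma exp_stable_of_contraction {eta rho : R} :
  0 < eta -> 0 < rho < 1 -> sampled_contractive eta 1 rho ->
  exists r a' : R, 0 <= r /\ 0 < a' /\
    forall x zm1 zd, is_solution f G n T x zm1 zd -> X (x 0) -> Z zm1 ->
      forall t : R, 0 <= t ->
        cmp_norm Nx Nz eta 1 (x t) (z_of T zd t)
        <= r * expR (- (a' * t)) * cmp_norm Nx Nz eta 1 (x 0) (z_of T zd 0).
Proof.
move=> eta0 /andP[r0 r1] contr.
set C := 2 + 2 * eta * (a / - c) ^+ 2.
have K0 : 0 <= a / - c by rewrite divr_ge0 // oppr_ge0 (ltW c0).
have C0 : 0 <= C by rewrite /C addr_ge0 // mulr_ge0 ?sqr_ge0 // mulr_ge0 // ltW.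
exists (Num.sqrt C / rho), (- ln rho / T).
split; first by rewrite divr_ge0 ?sqrtr_ge0 ?(ltW r0).
split; first by rewrite divr_gt0 // oppr_gt0 ln_lt0 // r0 r1.
move=> x zm1 zd sol Xx0 Zm1 t t0.
set k := samp_index T t.
have zof_zero s : z_of T (fun _ : nat => 0 : 'rV[R]_nz) s = 0 by [].
have at_sample := contr _ _ _ _ _ _ sol Xx0 Zm1 zero_solution X0 Z0 k.
rewrite !zof_zero !subr0 (z_of_sample _ _ T0) in at_sample.
have hq := sq_intersample_le eta0 (isnorm_ge0 hNx _) (isnorm_ge0 hNz _)
  K0
  (isnorm_ge0 hNx _) (intersample_bound sol Xx0 Zm1 t0).
rewrite -/k -/C in hq.
apply: le_trans (ler_wsqrtr hq) _.
rewrite sqrtrM // -[Num.sqrt (eta * _ + _)]/(cmp_norm Nx Nz eta 1 (x (k%:R * T)) (zd k)).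
apply: le_trans (ler_wpM2l (sqrtr_ge0 C) at_sample) _.
set cmp0 := cmp_norm _ _ _ _ (x 0) _.
have -> : Num.sqrt C / rho * expR (- (- ln rho / T * t)) * cmp0
    = Num.sqrt C * (expR (- (- ln rho / T * t)) / rho * cmp0) by ring.
apply: ler_wpM2l; first exact: sqrtr_ge0.
by apply: ler_wpM2r; [exact: sqrtr_ge0 | exact: expn_samp_index_le].
Qed.

End SampledData.

Theorem theorem1 (R : realType) (nx nz : nat)
  (Nx : 'rV[R]_nx -> R) (Nz : 'rV[R]_nz -> R)
  (wp : 'rV[R]_nx -> 'rV[R]_nx -> R)
  (X : set 'rV[R]_nx) (Z : set 'rV[R]_nz)
  (f : 'rV[R]_nx -> 'rV[R]_nz -> 'rV[R]_nx)
  (G : 'rV[R]_nx -> 'rV[R]_nz -> 'rV[R]_nz) :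
  is_norm Nx -> is_norm Nz ->
  is_weak_pairing wp -> wp_compatible wp Nx ->
  convex_set X -> convex_set Z ->
  X 0 -> Z 0 ->
  (forall x z, X x -> Z z -> Z (G x z)) ->
  {within [set p | X p.1 /\ Z p.2], continuous (fun p => f p.1 p.2)} ->
  {within [set p | X p.1 /\ Z p.2], continuous (fun p => G p.1 p.2)} ->
  f 0 0 = 0 -> G 0 0 = 0 ->
  (* forward invariance of X x Z for the interconnected system *)
  (forall (n : nat) (T : R), (0 < n)%N -> 0 < T ->
     forall x zm1 zd, is_solution f G n T x zm1 zd -> X (x 0) -> Z zm1 ->
       forall t, 0 <= t -> X (x t) /\ Z (z_of T zd t)) ->
  (* (A1) *)
  (Lip_fst Nx Nx X Z f < +oo)%E ->
  (* (A2) *)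
  (0 < Lip_snd Nz Nx X Z f < +oo)%E ->
  (0 < Lip_fst Nx Nz X Z G < +oo)%E ->
  (* (A3) *)
  (Lip_snd Nz Nz X Z G < 1)%E ->
  (- osLip_x wp Nx X Z f * (1 - Lip_snd Nz Nz X Z G)
     > Lip_snd Nz Nx X Z f * Lip_fst Nx Nz X Z G)%E ->
  forall (n : nat) (T : R), (0 < n)%N -> 0 < T ->
  exists eta1 eta2 : R, 0 < eta1 /\ 0 < eta2 /\
    (* (i) T-discrete-time contractivity *)
    (exists b : R, 0 < b < 1 /\
      forall x zm1 zd xb zm1b zdb,
        is_solution f G n T x zm1 zd -> X (x 0) -> Z zm1 ->
        is_solution f G n T xb zm1b zdb -> X (xb 0) -> Z zm1b ->
        forall k : nat,
          cmp_norm Nx Nz eta1 eta2 (x (k%:R * T) - xb (k%:R * T))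
                   (z_of T zd (k%:R * T) - z_of T zdb (k%:R * T))
          <= b ^+ k * cmp_norm Nx Nz eta1 eta2 (x 0 - xb 0)
                        (z_of T zd 0 - z_of T zdb 0)) /\
    (* (ii) global exponential stability of the origin *)
    (exists r a : R, 0 <= r /\ 0 < a /\
      forall x zm1 zd,
        is_solution f G n T x zm1 zd -> X (x 0) -> Z zm1 ->
        forall t : R, 0 <= t ->
          cmp_norm Nx Nz eta1 eta2 (x t) (z_of T zd t)
          <= r * expR (- (a * t)) * cmp_norm Nx Nz eta1 eta2 (x 0) (z_of T zd 0)).

Proof.
move=> hNx hNz hwp hc _ _ X0 Z0 ZG _ _ f00 G00 Hinv HA1 /andP[Lf0 Lfoo]
  /andP[Lg0 Lgoo] HA3 small_gain n T n0 T0.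
have [a Lfa] := ereal_finite (lt_trans (ltNyr 0) Lf0) Lfoo.
have [g Lga] := ereal_finite (lt_trans (ltNyr 0) Lg0) Lgoo.
have z_pairs : exists x z1 z2, [/\ X x, Z z1, Z z2 & z1 != z2].
  by apply: (Lip_snd_pairs (N1 := Nz) (N2 := Nx) (F := f)); rewrite Lfa.
have x_pairs : exists x1 x2 z, [/\ X x1, X x2, Z z & x1 != x2].
  by apply: (Lip_fst_pairs (N1 := Nx) (N2 := Nz) (F := G)); rewrite Lga.
have gam0 := Lip_snd_ge0 (F := G) hNz hNz z_pairs.
have [gam Lgam] := ereal_finite (lt_le_trans (ltNyr 0) gam0) (lt_trans HA3 (ltry 1)).
have [c Lc] := ereal_finite (osLip_x_gtNy x_pairs)
  (le_lt_trans (osLip_x_le_Lip_fst hNx hwp hc) HA1).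
rewrite Lfa lte_fin in Lf0; rewrite Lga lte_fin in Lg0.
rewrite Lgam lee_fin in gam0; rewrite Lgam lte_fin in HA3.
rewrite Lfa Lga Lgam Lc -EFinN -EFinB -!EFinM lte_fin in small_gain.
have c0 : c < 0 by nra.
have HosL := osLip_x_le hNx Lc.
have HLf := Lip_snd_le hNz hNx Lfa.
have HGx := Lip_fst_le hNx hNz Lga.
have HGz := Lip_snd_le hNz hNz Lgam.
have [eta eta0 [rho rho01 contr]] := sampled_contraction hNx hNz hwp hc ZG T0
  (Hinv n T n0 T0) c0 (ltW Lf0) (ltW Lg0) gam0 HosL HLf HGx HGz n0 HA3 Lf0 Lg0 small_gain.
exists eta, 1; do 2!split => //; split; first by exists rho.
exact: (exp_stable_of_contraction hNx hNz hwp hc T0 (Hinv n T n0 T0) c0 (ltW Lf0)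
  HosL HLf X0 Z0 f00 G00 eta0 rho01 contr).
Qed.
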